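(* Let $n\ge1$ and let $\mathcal{G}=(\mathcal{V},\mathcal{E})$ be the multigraph with vertex set $\mathcal{V}=\{0,\ldots,n\}$ and, for each $i\in\{1,\ldots,n\}$, exactly two parallel edges $e_i^{(0)},e_i^{(1)}$ between vertex $0$ and vertex $i$ (and no other edges). Let $\epsilon,\delta\ge0$ and $\alpha\ge0$, and let $\mathcal{A}$ be an algorithm that is $(\epsilon,\delta)$-differentially private on $\mathcal{G}$ and that on every input $w:\mathcal{E}\to\{0,1\}$ produces a spanning tree whose weight is in expectation at most $\alpha$ greater than the minimum spanning tree weight. Then there exists a $(2\epsilon,(1+e^{\epsilon})\delta)$-differentially private algorithm $\mathcal{B}$ which on every input $x\in\{0,1\}^n$ produces $y\in\{0,1\}^n$ such that the expected Hamming distance $d_H(x,y)$ is at most $\alpha$.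
   Context: Private edge weight model: for a graph $\mathcal{G}=(\mathcal{V},\mathcal{E})$, a weight function is $w:\mathcal{E}\to\mathbb{R}$. Two weight functions $w,w'$ are neighboring if $\sum_{e\in\mathcal{E}}|w(e)-w'(e)|\le1$. A randomized algorithm $\mathcal{A}$ on weight functions is $(\epsilon,\delta)$-differentially private on $\mathcal{G}$ if for all neighboring $w,w'$ and all sets $S$ of outputs, $\Pr[\mathcal{A}(w)\in S]\le e^{\epsilon}\Pr[\mathcal{A}(w')\in S]+\delta$. A randomized algorithm $\mathcal{B}$ with inputs in $\{0,1\}^n$ is $(\epsilon',\delta')$-differentially private if for all $x,x'\in\{0,1\}^n$ differing in exactly one coordinate and all sets $S$ of outputs, $\Pr[\mathcal{B}(x)\in S]\le e^{\epsilon'}\Pr[\mathcal{B}(x')\in S]+\delta'$. $d_H$ denotes Hamming distance. *)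

From HB Require Import structures.
From mathcomp Require Import all_boot all_order all_algebra.
From mathcomp Require Import all_classical all_reals all_analysis.
Set Implicit Arguments. Unset Strict Implicit. Unset Printing Implicit Defensive.
Import Order.TTheory GRing.Theory Num.Theory.
Local Open Scope ring_scope.

(* Edges: 'I_n * bool; the edge (i, b) is e_{i+1}^{(b)}, joining vertex 0
   and vertex i+1.  So there are exactly two parallel edges between 0 and
   each vertex j in {1..n}, and no other edges. *)
Definition Vtx (n : nat) := 'I_n.+1.
Definition Edge (n : nat) := ('I_n * bool)%type.

Definition far_end (n : nat) (e : Edge n) : 'I_n.+1 := lift ord0 e.1.

Definition incident (n : nat) (e : Edge n) (u v : 'I_n.+1) : bool :=
  ((u == ord0) && (v == far_end e)) || ((v == ord0) && (u == far_end e)).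

Definition adj (n : nat) (T : {set Edge n}) : rel 'I_n.+1 :=
  fun u v => [exists e in T, incident e u v].

Definition connected_sub (n : nat) (T : {set Edge n}) : bool :=
  [forall u, forall v, connect (adj T) u v].

Definition spanning_tree (n : nat) (T : {set Edge n}) : bool :=
  connected_sub T && (#|T| == n)%N.

Definition tree_weight (R : realType) (n : nat) (w : Edge n -> R)
  (T : {set Edge n}) : R := \sum_(e in T) w e.

(* ---------- Randomized algorithms with finite output space ----------
   A randomized algorithm with inputs in I and outputs in the finite type O
   is a map I -> (probability mass function on O). *)
Definition is_distr (R : realType) (O : finType) (p : O -> R) : Prop :=
  (forall o, 0 <= p o) /\ \sum_o p o = 1.

Definition Prob (R : realType) (O : finType) (p : O -> R) (S : {set O}) : R :=
  \sum_(o in S) p o.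

Definition edge_neighboring (R : realType) (n : nat) (w w' : Edge n -> R) : Prop :=
  \sum_e `|w e - w' e| <= 1.

Definition edge_DP (R : realType) (n : nat) (O : finType)
  (A : (Edge n -> R) -> O -> R) (eps delta : R) : Prop :=
  forall w w' : Edge n -> R, edge_neighboring w w' ->
  forall S : {set O}, Prob (A w) S <= expR eps * Prob (A w') S + delta.

Definition hamming (n : nat) (x y : {ffun 'I_n -> bool}) : nat :=
  #|[set i | x i != y i]|.

Definition bit_DP (R : realType) (n : nat) (O : finType)
  (B : {ffun 'I_n -> bool} -> O -> R) (eps delta : R) : Prop :=
  forall x x' : {ffun 'I_n -> bool}, hamming x x' = 1%N ->
  forall S : {set O}, Prob (B x) S <= expR eps * Prob (B x') S + delta.

Definition binary_weight (R : realType) (n : nat) (w : Edge n -> R) : Prop :=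
  forall e, w e = 0 \/ w e = 1.

From HB Require Import structures.
From mathcomp Require Import all_boot all_order all_algebra.
From mathcomp Require Import all_classical all_reals all_analysis.
From mathcomp Require Import ring lra.
Set Implicit Arguments. Unset Strict Implicit. Unset Printing Implicit Defensive.
Import Order.TTheory GRing.Theory Num.Theory.
Local Open Scope ring_scope.

(* Encode x as the weight function giving e_i^(b) weight 0 iff b = x_i; the
   minimum spanning trees are then exactly the trees {e_i^(x_i)}, of weight 0,
   and any spanning tree T of weight c decodes (via b_i = [e_i^(1) in T]) to a
   y with d_H(x, y) <= c.  Hamming-neighbouring x, x' give weights at l1
   distance 2, i.e. two edge-neighbouring steps through their midpoint, so
   B := decode o A o encode is (2 eps, (1 + e^eps) delta)-private. *)

Section Pushforward.
Variables (R : realType) (T U : finType) (f : T -> U).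

Definition pushforward (p : T -> R) (u : U) : R := \sum_(t | f t == u) p t.

Lemma is_distr_pushforward (p : T -> R) : is_distr p -> is_distr (pushforward p).
Proof.
case=> p_ge0 p_sum1; split=> [u|]; first by apply: sumr_ge0 => t _.
by rewrite -p_sum1 [RHS](partition_big f xpredT).
Qed.

Lemma Prob_pushforward (p : T -> R) (S : {set U}) :
  Prob (pushforward p) S = Prob p (f @^-1: S).
Proof.
rewrite /Prob (partition_big f (mem S)) => [|t]; last by rewrite inE.
apply: eq_bigr => u uS; apply: eq_bigl => t; rewrite inE.
by case: eqP => [->|_]; rewrite ?uS ?andbF.
Qed.

Lemma expectation_pushforward (p : T -> R) (g : U -> R) :
  \sum_u pushforward p u * g u = \sum_t p t * g (f t).
Proof.
rewrite [RHS](partition_big f xpredT) //=; apply: eq_bigr => u _.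
by rewrite mulr_suml; apply: eq_bigr => t /eqP ->.
Qed.

End Pushforward.

Lemma edge_DP_two_steps (R : realType) n (O : finType)
    (A : (Edge n -> R) -> O -> R) (eps delta : R) (w m w' : Edge n -> R) :
  0 <= delta -> edge_DP A eps delta ->
  edge_neighboring w m -> edge_neighboring m w' ->
  forall S, Prob (A w) S <= expR (2 * eps) * Prob (A w') S + (1 + expR eps) * delta.
Proof.
move=> delta_ge0 dpA wm mw' S; apply: le_trans (dpA _ _ wm S) _.
have step2 := ler_wpM2l (expR_ge0 eps) (dpA _ _ mw' S).
apply: le_trans (lerD step2 (lexx delta)) _.
by rewrite mulr_natl mulr2n expRD; lra.
Qed.

Definition midpoint (R : realType) n (w w' : Edge n -> R) (e : Edge n) : R :=
  (w e + w' e) / 2.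

Lemma edge_neighboring_midpoint (R : realType) n (w w' : Edge n -> R) :
  \sum_e `|w e - w' e| <= 2 ->
  edge_neighboring w (midpoint w w') /\ edge_neighboring (midpoint w w') w'.
Proof.
move=> dist_le2.
have half_dist (d : Edge n -> R) : (forall e, d e = (w e - w' e) / 2) ->
    \sum_e `|d e| <= 1.
  move=> dE; under eq_bigr do rewrite dE normrM [`|2^-1|]ger0_norm //.
  by rewrite -mulr_suml ler_pdivrMr // mul1r.
by split; apply: half_dist => e; rewrite /midpoint; field.
Qed.

Lemma sum_Edge (R : nmodType) n (F : Edge n -> R) :
  \sum_e F e = \sum_i (F (i, true) + F (i, false)).
Proof.
rewrite -(eq_bigr _ (fun i _ => big_bool _ (fun b => F (i, b)))) pair_big /=.
by apply: eq_bigr => -[].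
Qed.

Lemma hamming_sum (R : realType) n (x y : {ffun 'I_n -> bool}) :
  (hamming x y)%:R = \sum_i ((x i != y i) : nat)%:R :> R.
Proof.
rewrite /hamming -sum1_card natr_sum big_mkcond /=.
by apply: eq_bigr => i _; rewrite inE; case: (x i != y i).
Qed.

Definition weight_of_bits (R : realType) n (x : {ffun 'I_n -> bool}) (e : Edge n) : R :=
  ((e.2 != x e.1) : nat)%:R.

Definition bits_of_tree n (T : {set Edge n}) : {ffun 'I_n -> bool} :=
  [ffun i => (i, true) \in T].


Lemma binary_weight_of_bits (R : realType) n (x : {ffun 'I_n -> bool}) :
  binary_weight (weight_of_bits R x).
Proof. by move=> e; rewrite /weight_of_bits; case: (_ != _); [right|left]. Qed.

Lemma dist_weight_of_bits (R : realType) n (x x' : {ffun 'I_n -> bool}) :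
  \sum_e `|weight_of_bits R x e - weight_of_bits R x' e| = 2 * (hamming x x')%:R.
Proof.
rewrite hamming_sum mulr_sumr sum_Edge; apply: eq_bigr => i _.
rewrite /weight_of_bits /=.
by case: (x i); case: (x' i); rewrite /= ?subrr ?normr0 ?subr0 ?sub0r ?normrN
  ?normr1 ?addr0 ?add0r ?mulr0 ?mulr1.
Qed.

Definition tree_of_bits n (x : {ffun 'I_n -> bool}) : {set Edge n} :=
  [set (i, x i) | i : 'I_n].

Lemma spanning_tree_of_bits n (x : {ffun 'I_n -> bool}) : spanning_tree (tree_of_bits x).
Proof.
apply/andP; split; last by rewrite card_imset ?card_ord // => i j [].
have hub v : connect (adj (tree_of_bits x)) ord0 v /\ connect (adj (tree_of_bits x)) v ord0.
  case: (unliftP ord0 v) => [j ->|->]; last by split; apply: connect0.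
  have jT : (j, x j) \in tree_of_bits x by apply/imsetP; exists j.
  by split; apply: connect1; apply/existsP; exists (j, x j);
    rewrite jT /incident /far_end /= eqxx.
by apply/forallP => u; apply/forallP => v; apply: connect_trans (hub u).2 (hub v).1.
Qed.

Lemma tree_weight_tree_of_bits (R : realType) n (x : {ffun 'I_n -> bool}) :
  tree_weight (weight_of_bits R x) (tree_of_bits x) = 0.
Proof. by rewrite /tree_weight big1 // => _ /imsetP [i _ ->]; rewrite /weight_of_bits eqxx. Qed.

Lemma spanning_tree_covers n (T : {set Edge n}) : spanning_tree T ->
  forall i, exists b, (i, b) \in T.
Proof.
case/andP => /forallP conn _ i.
case/connectP: (forallP (conn ord0) (lift ord0 i)) => p.
case/lastP: p => [|p z] /=; first by move=> _ /eqP; rewrite eq_sym (negbTE (neq_lift _ _)).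
rewrite rcons_path last_rcons => /andP [_ /existsP [e /andP [eT e_inc]]] z_def.
move: e_inc; rewrite -z_def /incident /far_end.
case/orP => [/andP [_ /eqP/lift_inj ->]|/andP [/eqP]].
  by exists e.2; rewrite -surjective_pairing.
by move/esym/eqP; rewrite (negbTE (neq_lift _ _)).
Qed.

(* Decoding only looks at e_i^(1); that some e_i^(b) lies in T is what
   makes each disagreement with x cost an edge of weight 1. *)
Lemma hamming_bits_of_tree_le (R : realType) n (x : {ffun 'I_n -> bool})
    (T : {set Edge n}) : (forall i, exists b, (i, b) \in T) ->
  (hamming x (bits_of_tree T))%:R <= tree_weight (weight_of_bits R x) T.
Proof.
move=> covers; rewrite hamming_sum /tree_weight [X in _ <= X]big_mkcond sum_Edge /=.
apply: ler_sum => i _; rewrite /weight_of_bits /bits_of_tree ffunE /=.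
case: (covers i) => b; case: b; case: ((i, true) \in T); case: ((i, false) \in T);
  by case: (x i); rewrite //= ?addr0 ?add0r ?ler0n.
Qed.

Theorem lemmaB2 (R : realType) (n : nat) (hn : (0 < n)%N)
  (eps delta alpha : R) (heps : 0 <= eps) (hdelta : 0 <= delta)
  (halpha : 0 <= alpha)
  (A : (Edge n -> R) -> {set Edge n} -> R)
  (hAdistr : forall w, is_distr (A w))
  (hADP : edge_DP A eps delta)
  (hAtree : forall w, binary_weight w ->
     forall T, A w T != 0 -> spanning_tree T)
  (hAacc : forall w, binary_weight w ->
     forall T0, spanning_tree T0 ->
     \sum_T A w T * tree_weight w T <= tree_weight w T0 + alpha) :
  exists B : {ffun 'I_n -> bool} -> {ffun 'I_n -> bool} -> R,
    (forall x, is_distr (B x)) /\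
    bit_DP B (2 * eps) ((1 + expR eps) * delta) /\
    (forall x, \sum_y B x y * (hamming x y)%:R <= alpha).
Proof.
exists (fun x => pushforward (@bits_of_tree n) (A (weight_of_bits R x))).
split; [|split].
- move=> x; apply: is_distr_pushforward. exact: hAdistr.
- move=> x x' xx' S; rewrite !Prob_pushforward.
  set w := weight_of_bits R x; set w' := weight_of_bits R x'.
  have [wm mw'] : edge_neighboring w (midpoint w w') /\ edge_neighboring (midpoint w w') w'.
    by apply: edge_neighboring_midpoint; rewrite dist_weight_of_bits xx' mulr1.
  exact: edge_DP_two_steps hdelta hADP wm mw' _.
- move=> x; rewrite expectation_pushforward.
  have := hAacc _ (binary_weight_of_bits R x) _ (spanning_tree_of_bits x).
  rewrite tree_weight_tree_of_bits add0r; apply: le_trans; apply: ler_sum => T _.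
  have [->|AT_neq0] := eqVneq (A (weight_of_bits R x) T) 0; first by rewrite !mul0r.
  apply: ler_wpM2l; first exact: (hAdistr _).1.
  apply: hamming_bits_of_tree_le; apply: spanning_tree_covers.
  exact: hAtree (binary_weight_of_bits R x) _ AT_neq0.
Qed.
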